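(* Let $N\ge 1$ and $\tilde m=(0,m_1,\dots,m_{N-1})^T\in\mathbb{R}^{N}$. Let $\tilde a,\tilde b\in\mathbb{R}^N$ be vectors whose first entries both equal $1$ and which satisfy $$\mathcal{T}(\tilde m)\tilde a=\Lambda\tilde a,\qquad \mathcal{T}(\tilde m)\tilde b=-\Lambda\tilde b.$$ Then $\mathcal{T}(\tilde a)\,\mathcal{T}(\tilde b)=I$, the $N\times N$ identity matrix.
   Context: For $\mathbf{x}=(x_1,\dots,x_N)^T\in\mathbb{R}^N$, $\mathcal{T}(\mathbf{x})$ denotes the $N\times N$ lower triangular Toeplitz matrix whose first column is $\mathbf{x}$, i.e. $\mathcal{T}(\mathbf{x})_{ij}=x_{i-j+1}$ for $i\ge j$ and $0$ for $i<j$. $\Lambda=\mathrm{diag}(0,1,2,\dots,N-1)$. *)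

From HB Require Import structures.
From mathcomp Require Import all_boot all_order all_algebra.
Set Implicit Arguments. Unset Strict Implicit. Unset Printing Implicit Defensive.
Import Order.TTheory GRing.Theory Num.Theory.
Local Open Scope ring_scope.

Lemma toeplitz_idx_lt (N : nat) (i j : 'I_N) : (i - j < N)%N.
Proof. exact: leq_ltn_trans (leq_subr j i) (ltn_ord i). Qed.

Definition toeplitzL (R : pzRingType) (N : nat) (x : 'cV[R]_N) : 'M[R]_N :=
  \matrix_(i < N, j < N)
    if (j <= i)%N then x (Ordinal (toeplitz_idx_lt i j)) ord0 else 0.

Definition Lam (R : pzRingType) (N : nat) : 'M[R]_N :=
  \matrix_(i < N, j < N) if i == j then (i : nat)%:R else 0.

From HB Require Import structures.
From mathcomp Require Import all_boot all_order all_algebra.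
From mathcomp Require Import ring.

Set Implicit Arguments.
Unset Strict Implicit.
Unset Printing Implicit Defensive.
Import Order.TTheory GRing.Theory Num.Theory.
Local Open Scope ring_scope.

(* Identify a column vector x of size N with the polynomial
   x(X) = \sum_k x_k X^k, i.e. with a power series truncated mod X^N.  Then
   - T(x) T(y) is the lower triangular Toeplitz matrix of x(X) y(X) mod X^N,
     in particular T(x) y corresponds to x(X) y(X) mod X^N;
   - Lambda x corresponds to the Euler derivative X x'(X).
   The hypotheses therefore say  X a' = a m  and  X b' = - b m  mod X^N, and
   the Leibniz rule gives
       X (a b)' = (X a' - a m) b + a (X b' + b m) = 0  mod X^N,
   so k (ab)_k = 0 for every k < N. *)

(* A product of two lower triangular Toeplitz-shaped rows/columns is the
   convolution of their symbols; this is the entry formula of T(x) T(y). *)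
Lemma toeplitz_conv_sum (R : comNzRingType) (f g : nat -> R) (N i j : nat) :
  (i < N)%N ->
  \sum_(k < N) ((if (k <= i)%N then f (i - k)%N else 0) *
                (if (j <= k)%N then g (k - j)%N else 0)) =
  if (j <= i)%N then \sum_(l < (i - j).+1) g l * f (i - j - l)%N else 0.
Proof.
move=> iN.
rewrite (eq_bigr (fun k : 'I_N =>
    if (j <= k <= i)%N then f (i - k)%N * g (k - j)%N else 0)); last first.
  by move=> k _; case: (k <= i)%N; case: (j <= k)%N; rewrite ?mul0r ?mulr0 ?andbF.
rewrite -big_mkcond /=.
rewrite -(big_mkord (fun k => j <= k <= i)%N (fun k => f (i - k)%N * g (k - j)%N)).
case: leqP => [ji | ij]; last first.
  rewrite big_nat_cond big1 // => k /andP [_ /andP [jk ki]].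
  by move: (leq_trans jk ki); rewrite leqNgt ij.
(* Only the indices k = j + l with l <= i - j contribute. *)
rewrite (big_cat_nat (n := j)) //=; last by rewrite (leq_trans ji) // ltnW.
rewrite big_nat_cond big1 ?add0r; last first.
  by move=> k /andP [/andP [_ kj] /andP [jk _]]; move: (leq_trans kj jk); rewrite ltnn.
rewrite (big_cat_nat (n := i.+1)) //=; last by rewrite ltnW.
rewrite [X in _ + X]big_nat_cond [X in _ + X]big1 ?addr0; last first.
  by move=> k /andP [/andP [ik _] /andP [_ ki]]; move: (leq_trans ik ki); rewrite ltnn.
rewrite -{1}(add0n j) big_addn subSn //.
rewrite -(big_mkord xpredT (fun l => g l * f (i - j - l)%N)).
rewrite big_nat_cond [RHS]big_nat_cond.
apply: eq_big => [l | l _].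
  by rewrite leq_addl /= andbT ltnS leq_subRL // addnC andbb.
by rewrite addnK mulrC addnC subnDA.
Qed.

Section VectorsAsPolynomials.
Variables (R : comNzRingType) (n : nat).
Local Notation N := n.+1.

Definition cvpoly (x : 'cV[R]_N) : {poly R} := \poly_(k < N) x (inord k) 0.

Lemma coef_cvpoly (x : 'cV[R]_N) (k : 'I_N) : (cvpoly x)`_k = x k 0.
Proof. by rewrite coef_poly ltn_ord inord_val. Qed.

Lemma toeplitz_coef (x : 'cV[R]_N) (i k : 'I_N) :
  toeplitzL x i k = if (k <= i)%N then (cvpoly x)`_(i - k) else 0.
Proof.
rewrite mxE coef_poly; case: ifP => // _.
rewrite (toeplitz_idx_lt i k); congr (x _ 0); apply: val_inj.
by rewrite /= inordK // (toeplitz_idx_lt i k).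
Qed.

Lemma toeplitz_col0 (x : 'cV[R]_N) (k : 'I_N) : toeplitzL x k ord0 = x k 0.
Proof. by rewrite toeplitz_coef subn0 coef_cvpoly. Qed.

Lemma toeplitz_mulmx (x y : 'cV[R]_N) (i j : 'I_N) :
  (toeplitzL x *m toeplitzL y) i j =
  if (j <= i)%N then (cvpoly x * cvpoly y)`_(i - j) else 0.
Proof.
rewrite mxE (eq_bigr (fun k : 'I_N =>
    (if (k <= i)%N then (cvpoly x)`_(i - k) else 0) *
    (if (j <= k)%N then (cvpoly y)`_(k - j) else 0))); last first.
  by move=> k _; rewrite !toeplitz_coef.
rewrite (toeplitz_conv_sum (fun d => (cvpoly x)`_d) (fun d => (cvpoly y)`_d) j (ltn_ord i)).
by case: ifP => // _; rewrite mulrC coefM.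
Qed.

Lemma toeplitz_mulmx_col (x y : 'cV[R]_N) (i : 'I_N) :
  (toeplitzL x *m y) i 0 = (cvpoly x * cvpoly y)`_i.
Proof.
have -> : (toeplitzL x *m y) i 0 = (toeplitzL x *m toeplitzL y) i ord0.
  by rewrite !mxE; apply: eq_bigr => k _; rewrite toeplitz_col0.
by rewrite toeplitz_mulmx subn0.
Qed.

Lemma Lam_mulmx_col (x : 'cV[R]_N) (i : 'I_N) :
  (@Lam R N *m x) i 0 = ('X * (cvpoly x)^`())`_i.
Proof.
rewrite mxE (bigD1 i) //= big1 ?addr0; last first.
  by move=> k ki; rewrite mxE eq_sym (negbTE ki) mul0r.
rewrite mxE eqxx -coef_cvpoly coefXM.
by case: (nat_of_ord i) => [|k]; rewrite ?mul0r //= coef_deriv mulr_natl.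
Qed.

Lemma toeplitz_mulmx_eq1 (x y : 'cV[R]_N) :
  (forall k, (k < N)%N -> (cvpoly x * cvpoly y)`_k = (k == 0%N)%:R) ->
  toeplitzL x *m toeplitzL y = 1%:M.
Proof.
move=> xy1; apply/matrixP => i j; rewrite toeplitz_mulmx !mxE -val_eqE /=.
case: leqP => [ji | ij]; last by rewrite ltn_eqF.
rewrite xy1; last exact: leq_ltn_trans (leq_subr j i) (ltn_ord i).
by rewrite subn_eq0 eqn_leq ji andbT.
Qed.

End VectorsAsPolynomials.

Definition vanishes_below (R : nzSemiRingType) (N : nat) (p : {poly R}) :=
  forall k, (k < N)%N -> p`_k = 0.

Lemma vanishes_below_mulr (R : nzRingType) (N : nat) (p q : {poly R}) :
  vanishes_below N p -> vanishes_below N (p * q).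
Proof.
move=> p0 k kN; rewrite coefM big1 // => j _.
by rewrite p0 ?mul0r // (leq_ltn_trans _ kN) // -ltnS.
Qed.

(* Leibniz rule for the Euler derivative, arranged around the two
   differential equations X a' = a m and X b' = - b m. *)
Lemma euler_deriv_mul (R : comNzRingType) (a b m : {poly R}) :
  'X * (a * b)^`() = ('X * a^`() - a * m) * b + a * ('X * b^`() + b * m).
Proof. by rewrite derivM; ring. Qed.

Lemma euler_deriv_vanishes (R : numDomainType) (N : nat) (p : {poly R}) :
  vanishes_below N ('X * p^`()) -> forall k, (0 < k < N)%N -> p`_k = 0.
Proof.
move=> dp0 k /andP [k0 kN]; have := dp0 k kN.
rewrite coefXM; case: k k0 kN => // k _ _ /= /eqP.
by rewrite coef_deriv mulrn_eq0 /= => /eqP.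
Qed.

Theorem lemma1 (R : realFieldType) (n : nat)
  (m a b : 'cV[R]_(n.+1))
  (hm0 : m ord0 0 = 0)
  (ha0 : a ord0 0 = 1) (hb0 : b ord0 0 = 1)
  (ha : toeplitzL m *m a = @Lam R n.+1 *m a)
  (hb : toeplitzL m *m b = - (@Lam R n.+1 *m b)) :
  toeplitzL a *m toeplitzL b = 1%:M.
Proof.
set A := cvpoly a; set B := cvpoly b; set M := cvpoly m.
have eqA : vanishes_below n.+1 ('X * A^`() - A * M).
  move=> k kN; move/matrixP: ha => /(_ (Ordinal kN) 0).
  by rewrite toeplitz_mulmx_col Lam_mulmx_col coefB mulrC => ->; rewrite subrr.
have eqB : vanishes_below n.+1 ('X * B^`() + B * M).
  move=> k kN; move/matrixP: hb => /(_ (Ordinal kN) 0).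
  by rewrite toeplitz_mulmx_col mxE Lam_mulmx_col coefD mulrC => ->; rewrite subrr.
have eqAB : vanishes_below n.+1 ('X * (A * B)^`()).
  move=> k kN; rewrite (euler_deriv_mul _ _ M) coefD.
  by rewrite (vanishes_below_mulr _ eqA) // mulrC (vanishes_below_mulr _ eqB) // addr0.
apply: toeplitz_mulmx_eq1 => -[_ | k kN].
  by rewrite coef0M (coef_cvpoly a ord0) (coef_cvpoly b ord0) ha0 hb0 mulr1.
exact: euler_deriv_vanishes eqAB _ _.
Qed.
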